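(* Let $\mathcal{T}_S,\mathcal{T}_B$ be propositional theories, $V_A$ a set of propositional variables, and let $\langle\mathcal{T}^l,\mathcal{T}^u\rangle$ be an $\alpha$-abstraction from $\mathcal{T}_S$ with respect to $\mathcal{T}_B$ over $V_A$ which is exact, i.e. $\mathcal{T}_B\models\mathcal{T}^l\equiv\mathcal{T}^u$. Then $\langle\mathcal{T}^l,\mathcal{T}^u\rangle$ is the tightest abstraction: $\mathcal{T}_B\models \mathcal{T}^l\equiv \mathrm{wsc}(\mathcal{T}_S;\mathcal{T}_B;V_A)$ and $\mathcal{T}_B\models \mathcal{T}^u\equiv \mathrm{snc}(\mathcal{T}_S;\mathcal{T}_B;V_A)$; in particular for every formula $C$ over $V_A$, $\mathcal{T}_B\models C\to\mathcal{T}_S$ iff $\mathcal{T}_B\models C\to\mathcal{T}^l$, and for every formula $D$ over $V_A$, $\mathcal{T}_B\models\mathcal{T}_S\to D$ iff $\mathcal{T}_B\models \mathcal{T}^u\to D$.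
   Context: Classical propositional logic. A theory is a finite set of propositional formulas, identified with the conjunction of its elements (the empty theory is identified with $\top$). A formula is ''over'' a set $W$ of propositional variables if all variables occurring in it belong to $W$. $\mathcal{T}\models B$ means every truth assignment to the variables involved that satisfies $\mathcal{T}$ also satisfies $B$. Propositional quantifiers are abbreviations: $\exists p\,B := B[p:=\bot]\lor B[p:=\top]$ and $\forall p\,B := B[p:=\bot]\land B[p:=\top]$; for a finite set $V=\{p_1,\dots,p_k\}$, $\exists V$ and $\forall V$ denote iterated quantifiers. For formulas $A,\mathcal{T}$ and a set $W$ of variables, let $V$ be the set of variables occurring in $A$ or $\mathcal{T}$ but not in $W$, and define $\mathrm{snc}(A;\mathcal{T};W):=\exists V(\mathcal{T}\land A)$ and $\mathrm{wsc}(A;\mathcal{T};W):=\forall V(\mathcal{T}\to A)$. An $\alpha$-abstraction from $\mathcal{T}_S$ with respect to $\mathcal{T}_B$ over $V_A$ is a pair $\langle\mathcal{T}^l,\mathcal{T}^u\rangle$ of theories over $V_A$ such that (a) for every formula $C$ over $V_A$: if $\mathcal{T}_B\models C\to\mathcal{T}^l$ then $\mathcal{T}_B\models C\to\mathcal{T}_S$; and (b) for every formula $D$ over $V_A$: if $\mathcal{T}_B\models \mathcal{T}^u\to D$ then $\mathcal{T}_B\models\mathcal{T}_S\to D$. *)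

From Stdlib Require Import List Bool Arith.
Import ListNotations.

Inductive form : Type :=
| Var : nat -> form
| Bot : form
| Top : form
| Neg : form -> form
| And : form -> form -> form
| Or  : form -> form -> form
| Imp : form -> form -> form
| Iff : form -> form -> form.

Fixpoint eval (v : nat -> bool) (f : form) : bool :=
  match f with
  | Var p => v p
  | Bot => false
  | Top => true
  | Neg a => negb (eval v a)
  | And a b => eval v a && eval v b
  | Or a b => eval v a || eval v b
  | Imp a b => implb (eval v a) (eval v b)
  | Iff a b => Bool.eqb (eval v a) (eval v b)
  end.

Fixpoint vars (f : form) : list nat :=
  match f with
  | Var p => [p]
  | Bot | Top => []
  | Neg a => vars a
  | And a b | Or a b | Imp a b | Iff a b => vars a ++ vars b
  end.

Definition theory := list form.
Definition thy (T : theory) : form := fold_right And Top T.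

Definition varset := nat -> bool.

Definition over (W : varset) (f : form) : Prop :=
  forall p, In p (vars f) -> W p = true.
Definition theory_over (W : varset) (T : theory) : Prop :=
  forall f, In f T -> over W f.

Definition models (T B : form) : Prop :=
  forall v : nat -> bool, eval v T = true -> eval v B = true.

Fixpoint subst (p : nat) (c : form) (f : form) : form :=
  match f with
  | Var q => if Nat.eqb p q then c else Var q
  | Bot => Bot
  | Top => Top
  | Neg a => Neg (subst p c a)
  | And a b => And (subst p c a) (subst p c b)
  | Or a b => Or (subst p c a) (subst p c b)
  | Imp a b => Imp (subst p c a) (subst p c b)
  | Iff a b => Iff (subst p c a) (subst p c b)
  end.

(* Propositional quantifiers as abbreviations. *)
Definition ex1 (p : nat) (B : form) : form := Or (subst p Bot B) (subst p Top B).
Definition all1 (p : nat) (B : form) : form := And (subst p Bot B) (subst p Top B).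
Definition exV (V : list nat) (B : form) : form := fold_right ex1 B V.
Definition allV (V : list nat) (B : form) : form := fold_right all1 B V.

Definition elimvars (A T : form) (W : varset) : list nat :=
  filter (fun p => negb (W p)) (nodup Nat.eq_dec (vars A ++ vars T)).

Definition snc (A T : form) (W : varset) : form :=
  exV (elimvars A T W) (And T A).
Definition wsc (A T : form) (W : varset) : form :=
  allV (elimvars A T W) (Imp T A).

Definition alpha_abstraction (TS TB : theory) (VA : varset) (Tl Tu : theory) : Prop :=
  theory_over VA Tl /\ theory_over VA Tu /\
  (forall C : form, over VA C ->
     models (thy TB) (Imp C (thy Tl)) -> models (thy TB) (Imp C (thy TS))) /\
  (forall D : form, over VA D ->
     models (thy TB) (Imp (thy Tu) D) -> models (thy TB) (Imp (thy TS) D)).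

(* Under T_B the bounds of an exact abstraction are sandwiched as
   T^l -> T_S -> T^u -> T^l (take C := T^l and D := T^u in the definition),
   so both are T_B-equivalent to T_S.  A formula L over V_A that is
   T_B-equivalent to T_S is T_B-equivalent to wsc and to snc: the quantifiers
   range only over variables outside V_A, on which L does not depend. *)

From Stdlib Require Import List Bool Arith.
Import ListNotations.

Definition upd (v : nat -> bool) (p : nat) (b : bool) : nat -> bool :=
  fun q => if Nat.eqb p q then b else v q.

Lemma eval_subst v p c f :
  eval v (subst p c f) = eval (upd v p (eval v c)) f.
Proof.
  induction f; simpl; try rewrite IHf; try rewrite IHf1, IHf2; auto.
  unfold upd. destruct (Nat.eqb p n); reflexivity.
Qed.

Lemma eval_ext_vars v w f :
  (forall p, In p (vars f) -> v p = w p) -> eval v f = eval w f.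
Proof.
  induction f; simpl; intros H; auto;
    try (rewrite IHf; auto);
    try (rewrite IHf1, IHf2; auto; intros; apply H; apply in_or_app; auto).
Qed.

Definition agree_off (V : list nat) (v w : nat -> bool) : Prop :=
  forall q, ~ In q V -> w q = v q.

Lemma agree_off_refl V v : agree_off V v v.
Proof. intros q _; reflexivity. Qed.

Lemma agree_off_cons_upd p V v w b :
  agree_off V (upd v p b) w -> agree_off (p :: V) v w.
Proof.
  intros H q Hq. rewrite H by (intro; apply Hq; right; assumption).
  unfold upd. destruct (Nat.eqb_spec p q); [subst; exfalso; apply Hq; left|]; auto.
Qed.

Lemma agree_off_cons_inv p V v w :
  agree_off (p :: V) v w -> agree_off V (upd v p (w p)) w.
Proof.
  intros H q Hq. unfold upd.
  destruct (Nat.eqb_spec p q) as [->|Hpq]; auto.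
  apply H. intros [E|E]; auto.
Qed.

Lemma eval_allV V : forall B v,
  eval v (allV V B) = true <-> (forall w, agree_off V v w -> eval w B = true).
Proof.
  induction V as [|p V IH]; intros B v; simpl.
  - split; intros H.
    + intros w Hw. rewrite (eval_ext_vars w v); auto.
    + apply H, agree_off_refl.
  - unfold all1. simpl. rewrite !eval_subst. simpl. rewrite andb_true_iff.
    split.
    + intros [H0 H1] w Hw.
      assert (Hwp : eval (upd v p (w p)) (allV V B) = true)
        by (destruct (w p); assumption).
      exact (proj1 (IH B _) Hwp w (agree_off_cons_inv p V v w Hw)).
    + intros H. split; apply IH; intros w Hw;
        exact (H w (agree_off_cons_upd p V v w _ Hw)).
Qed.

Lemma eval_exV V : forall B v,
  eval v (exV V B) = true <-> (exists w, agree_off V v w /\ eval w B = true).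
Proof.
  induction V as [|p V IH]; intros B v; simpl.
  - split.
    + intros H. exists v. split; [apply agree_off_refl | exact H].
    + intros [w [Hw H]]. rewrite (eval_ext_vars v w); auto.
      intros q _. symmetry. apply Hw. auto.
  - unfold ex1. simpl. rewrite !eval_subst. simpl. rewrite orb_true_iff.
    split.
    + intros [H|H]; apply IH in H as [w [Hw H]];
        exists w; split; try exact H; eapply agree_off_cons_upd; exact Hw.
    + intros [w [Hw H]].
      assert (Hwp : eval (upd v p (w p)) (exV V B) = true)
        by (apply IH; exists w; split; [apply agree_off_cons_inv|]; assumption).
      destruct (w p); auto.
Qed.

Lemma over_thy W T : theory_over W T -> over W (thy T).
Proof.
  induction T as [|f T IH]; intros H p Hp; simpl in *.
  - contradiction.
  - apply in_app_or in Hp as [Hp|Hp].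
    + apply (H f); [left; reflexivity | exact Hp].
    + apply IH; [intros g Hg; apply H; right; exact Hg | exact Hp].
Qed.

Lemma elimvars_notin A T W p : In p (elimvars A T W) -> W p = false.
Proof.
  unfold elimvars. rewrite filter_In. intros [_ H]. apply negb_true_iff, H.
Qed.

Lemma eval_over_agree_off W L A T v w :
  over W L -> agree_off (elimvars A T W) v w -> eval w L = eval v L.
Proof.
  intros HL Hw. apply eval_ext_vars. intros p Hp. apply Hw. intros Hin.
  apply elimvars_notin in Hin. rewrite HL in Hin by exact Hp. discriminate.
Qed.

Lemma models_Iff T A B :
  models T (Iff A B) <-> (forall v, eval v T = true -> eval v A = eval v B).
Proof.
  unfold models. simpl.
  split; intros H v Hv; specialize (H v Hv); apply eqb_prop in H || apply eqb_true_iff;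
    assumption.
Qed.

Lemma models_Imp T A B :
  models T (Imp A B) <-> (forall v, eval v T = true -> eval v A = true -> eval v B = true).
Proof.
  unfold models. simpl.
  split; intros H v Hv; specialize (H v Hv).
  - intros HA. rewrite HA in H. exact H.
  - destruct (eval v A); simpl; auto.
Qed.

Lemma models_Imp_refl T A : models T (Imp A A).
Proof. apply models_Imp; auto. Qed.

Lemma models_Iff_sym T A B : models T (Iff A B) -> models T (Iff B A).
Proof. rewrite !models_Iff. intros H v Hv. symmetry. auto. Qed.

Lemma models_Iff_trans T A B C :
  models T (Iff A B) -> models T (Iff B C) -> models T (Iff A C).
Proof. rewrite !models_Iff. intros H1 H2 v Hv. rewrite H1; auto. Qed.

Lemma models_Iff_of_Imp_cycle T A B C :
  models T (Imp A B) -> models T (Imp B C) -> models T (Iff A C) ->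
  models T (Iff A B).
Proof.
  rewrite !models_Imp, !models_Iff. intros HAB HBC HAC v Hv.
  specialize (HAB v Hv). specialize (HBC v Hv). specialize (HAC v Hv).
  destruct (eval v A), (eval v B), (eval v C); auto;
    try discriminate HAC; try discriminate (HAB eq_refl); discriminate (HBC eq_refl).
Qed.

Lemma models_Imp_Iff_l T A B C :
  models T (Iff A B) -> (models T (Imp C A) <-> models T (Imp C B)).
Proof.
  rewrite models_Iff, !models_Imp. intros H.
  split; intros HC v Hv; [rewrite <- H | rewrite H]; auto.
Qed.

Lemma models_Imp_Iff_r T A B D :
  models T (Iff A B) -> (models T (Imp A D) <-> models T (Imp B D)).
Proof.
  rewrite models_Iff, !models_Imp. intros H.
  split; intros HD v Hv; [rewrite <- H | rewrite H]; auto.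
Qed.

Section DefinableOverW.

Variables (T A L : form) (W : varset).
Hypothesis L_over : over W L.
Hypothesis L_equiv : models T (Iff L A).

Let eval_equiv v : eval v T = true -> eval v A = eval v L.
Proof. intros Hv. symmetry. exact (proj1 (models_Iff _ _ _) L_equiv v Hv). Qed.

Lemma models_Iff_wsc : models T (Iff L (wsc A T W)).
Proof.
  apply models_Iff. intros v Hv. unfold wsc.
  destruct (eval v L) eqn:HL; symmetry.
  - apply eval_allV. intros w Hw. simpl.
    destruct (eval w T) eqn:HT; auto. simpl.
    rewrite eval_equiv by exact HT.
    rewrite (eval_over_agree_off W L A T v w); assumption.
  - apply not_true_iff_false. intros Hall.
    specialize (proj1 (eval_allV _ _ v) Hall v (agree_off_refl _ v)). simpl.
    rewrite Hv, eval_equiv, HL by exact Hv. discriminate.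
Qed.

Lemma models_Iff_snc : models T (Iff L (snc A T W)).
Proof.
  apply models_Iff. intros v Hv. unfold snc.
  destruct (eval v L) eqn:HL; symmetry.
  - apply eval_exV. exists v. split; [apply agree_off_refl|]. simpl.
    rewrite Hv, eval_equiv by exact Hv. exact HL.
  - apply not_true_iff_false. intros Hex.
    apply eval_exV in Hex as [w [Hw Hex]]. simpl in Hex.
    apply andb_true_iff in Hex as [HT HA].
    rewrite eval_equiv, (eval_over_agree_off W L A T v w) in HA by assumption.
    congruence.
Qed.

End DefinableOverW.

Theorem mainTheorem4 (TS TB : theory) (VA : varset) (Tl Tu : theory) :
  alpha_abstraction TS TB VA Tl Tu ->
  models (thy TB) (Iff (thy Tl) (thy Tu)) ->
  models (thy TB) (Iff (thy Tl) (wsc (thy TS) (thy TB) VA)) /\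
  models (thy TB) (Iff (thy Tu) (snc (thy TS) (thy TB) VA)) /\
  (forall C : form, over VA C ->
     (models (thy TB) (Imp C (thy TS)) <-> models (thy TB) (Imp C (thy Tl)))) /\
  (forall D : form, over VA D ->
     (models (thy TB) (Imp (thy TS) D) <-> models (thy TB) (Imp (thy Tu) D))).
Proof.
  intros [Hl_over [Hu_over [Hlower Hupper]]] Hexact.
  apply over_thy in Hl_over. apply over_thy in Hu_over.
  assert (Hl_S : models (thy TB) (Imp (thy Tl) (thy TS)))
    by (apply Hlower; [exact Hl_over | apply models_Imp_refl]).
  assert (HS_u : models (thy TB) (Imp (thy TS) (thy Tu)))
    by (apply Hupper; [exact Hu_over | apply models_Imp_refl]).
  assert (Hl_eq : models (thy TB) (Iff (thy Tl) (thy TS)))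
    by exact (models_Iff_of_Imp_cycle _ _ _ _ Hl_S HS_u Hexact).
  assert (Hu_eq : models (thy TB) (Iff (thy Tu) (thy TS)))
    by exact (models_Iff_trans _ _ _ _ (models_Iff_sym _ _ _ Hexact) Hl_eq).
  split; [|split; [|split]].
  - exact (models_Iff_wsc _ _ _ _ Hl_over Hl_eq).
  - exact (models_Iff_snc _ _ _ _ Hu_over Hu_eq).
  - intros C _. apply models_Imp_Iff_l, models_Iff_sym, Hl_eq.
  - intros D _. apply models_Imp_Iff_r, models_Iff_sym, Hu_eq.
Qed.
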